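(* There exist reduced valuation monoids $H_1$ and $H_2$ that are not isomorphic but such that $\mathcal{P}_{\mathrm{fin},1}(H_1)\simeq\mathcal{P}_{\mathrm{fin},1}(H_2)$. For instance, one may take the additively written submonoids of $(\mathbb{Z}^2,+)$ given by $H_1=(\mathbb{Z}\times\mathbb{N})\cup(\mathbb{N}_0\times\{0\})$ and $H_2=\{(x,y)\in\mathbb{Z}^2: y\le \alpha x\}$, where $\alpha>0$ is an irrational real number.
   Context: $\mathbb{N}$ denotes the positive integers and $\mathbb{N}_0$ the non-negative integers. A commutative monoid $H$ is cancellative if $ac=bc$ implies $a=b$. For a commutative cancellative monoid $H$, $\mathsf{q}(H)$ denotes its quotient group, with $H\subseteq\mathsf{q}(H)$. A commutative cancellative monoid $H$ is a valuation monoid if for every $x\in\mathsf{q}(H)$ we have $x\in H$ or $x^{-1}\in H$ (additively: $x\in H$ or $-x\in H$); it is reduced if its only invertible element is the identity. For a monoid $H$ with identity $1$, $\mathcal{P}_{\mathrm{fin},1}(H)$ is the set of all finite subsets of $H$ containing the identity, a monoid under setwise multiplication $(X,Y)\mapsto\{xy: x\in X, y\in Y\}$ (setwise addition in the additive case) with identity $\{1\}$. *)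

From HB Require Import structures.
From mathcomp Require Import all_boot all_order all_algebra.
From mathcomp Require Import reals.
From Stdlib Require List.
Set Implicit Arguments. Unset Strict Implicit. Unset Printing Implicit Defensive.
Import Order.TTheory GRing.Theory Num.Theory.
Local Open Scope ring_scope.

Record cmonoid := CMonoid {
  carrier :> Type;
  mop : carrier -> carrier -> carrier;
  munit : carrier;
  mopA : associative mop;
  mopC : commutative mop;
  mop1 : left_id munit mop }.

Arguments mop {c}.
Arguments munit c : clear implicits.

Definition cancellative (H : cmonoid) : Prop :=
  forall a b c : H, mop a c = mop b c -> a = b.

Definition reduced (H : cmonoid) : Prop :=
  forall u : H, (exists v : H, mop u v = munit H) -> u = munit H.

(* q(H): an abelian group G (written additively) with an injective monoid
   homomorphism f : H -> G whose image generates G (every element is a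
   quotient f a - f b); valuation: every element of q(H) or its inverse
   lies in (the image of) H. *)
Definition quotient_group_of (H : cmonoid) (G : zmodType) (f : H -> G) : Prop :=
  [/\ injective f, f (munit H) = 0,
      (forall a b : H, f (mop a b) = f a + f b) &
      (forall g : G, exists a b : H, g = f a - f b)].

Definition valuation_monoid (H : cmonoid) : Prop :=
  exists (G : zmodType) (f : H -> G), quotient_group_of f /\
    forall g : G, (exists a : H, f a = g) \/ (exists a : H, f a = - g).

Definition monoid_iso (H1 H2 : cmonoid) : Prop :=
  exists f : H1 -> H2, bijective f /\ forall a b : H1, f (mop a b) = mop (f a) (f b).

(* Subsets of H are predicates H -> Prop (compared by Leibniz equality,
   i.e. extensionally under propext/funext). *)
Definition finite_set (T : Type) (X : T -> Prop) : Prop :=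
  exists s : seq T, forall x, X x <-> List.In x s.

Definition Pfin1 (H : cmonoid) (X : H -> Prop) : Prop :=
  finite_set X /\ X (munit H).

Definition setop (H : cmonoid) (X Y : H -> Prop) : H -> Prop :=
  fun z => exists x y, [/\ X x, Y y & z = mop x y].

Definition Pfin1_iso (H1 H2 : cmonoid) : Prop :=
  exists F : (H1 -> Prop) -> (H2 -> Prop),
    [/\ (forall X, Pfin1 X -> Pfin1 (F X)),
        (forall X Y, Pfin1 X -> Pfin1 Y -> F X = F Y -> X = Y),
        (forall Y, Pfin1 Y -> exists2 X, Pfin1 X & F X = Y) &
        (forall X Y, Pfin1 X -> Pfin1 Y -> F (setop X Y) = setop (F X) (F Y))].

Definition witness_pair (H1 H2 : cmonoid) : Prop :=
  cancellative H1 /\ cancellative H2 /\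
  valuation_monoid H1 /\ valuation_monoid H2 /\
  reduced H1 /\ reduced H2 /\
  ~ monoid_iso H1 H2 /\ Pfin1_iso H1 H2.

Definition addp (p q : int * int) : int * int := (p.1 + q.1, p.2 + q.2).

Section SubZ2.
Variable P : pred (int * int).
Hypothesis P0 : P (0, 0).
Hypothesis PD : forall p q, P p -> P q -> P (addp p q).

Definition subZ2_op (a b : {p : int * int | P p}) : {p : int * int | P p} :=
  exist _ (addp (val a) (val b)) (PD (valP a) (valP b)).
Definition subZ2_unit : {p : int * int | P p} := exist _ (0, 0) P0.

Lemma subZ2_A : associative subZ2_op.
Proof. move=> a b c; apply: val_inj; rewrite /= /addp /= !addrA //. Qed.
Lemma subZ2_C : commutative subZ2_op.
Proof. move=> a b; apply: val_inj; rewrite /= /addp /= (addrC (val a).1) (addrC (val a).2) //. Qed.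
Lemma subZ2_1 : left_id subZ2_unit subZ2_op.
Proof. move=> a; apply: val_inj; rewrite /= /addp /= !add0r; by case: (val a). Qed.

Definition subZ2 : cmonoid := CMonoid subZ2_A subZ2_C subZ2_1.
End SubZ2.

Definition H1pred : pred (int * int) :=
  fun p => (0 < p.2) || ((p.2 == 0) && (0 <= p.1)).

Lemma H1pred0 : H1pred (0, 0).
Proof. by []. Qed.

Lemma H1predD p q : H1pred p -> H1pred q -> H1pred (addp p q).
Proof.
case: p q => [x1 y1] [x2 y2]; rewrite /H1pred /addp /=.
case/orP=> [h1|/andP[/eqP-> h1]]; case/orP=> [h2|/andP[/eqP-> h2]].
- by rewrite addr_gt0.
- by rewrite addr0 h1.
- by rewrite add0r h2.
- by rewrite addr0 eqxx addr_ge0 // orbT.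
Qed.

Definition H1ex : cmonoid := subZ2 H1pred0 H1predD.

Definition H2pred (R : realType) (alpha : R) : pred (int * int) :=
  fun p => p.2%:~R <= alpha * p.1%:~R.

Lemma H2pred0 (R : realType) (alpha : R) : H2pred alpha (0, 0).
Proof. by rewrite /H2pred /= mulr0 lexx. Qed.

Lemma H2predD (R : realType) (alpha : R) p q :
  H2pred alpha p -> H2pred alpha q -> H2pred alpha (addp p q).
Proof.
case: p q => [x1 y1] [x2 y2]; rewrite /H2pred /addp /= !rmorphD mulrDr => h1 h2.
exact: lerD.
Qed.

Definition H2ex (R : realType) (alpha : R) : cmonoid :=
  subZ2 (H2pred0 alpha) (@H2predD R alpha).

(* Both monoids are positive cones of total orders on Z^2 (for H2 because alpha
   is irrational), hence reduced valuation monoids with quotient group Z^2.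
   If P and Q are two such cones, a finite set X in P containing 0 has a least
   element m for the order of Q, and X - m is a finite subset of Q containing 0;
   X |-> X - min_Q X is a monoid isomorphism P_fin,1(P) -> P_fin,1(Q) with
   inverse Y |-> Y - min_P Y.  The cones themselves are not isomorphic: in H2
   every element divides some multiple of each nonzero element (a nonzero u has
   alpha u.1 - u.2 > 0, and the reals are archimedean), whereas in H1 the element
   (0,1) divides no multiple of (1,0). *)

From HB Require Import structures.
From mathcomp Require Import all_boot all_order all_algebra.
From mathcomp Require Import reals.
From mathcomp Require Import zify ring.
From mathcomp Require Import Rstruct.
From mathcomp Require trigo pi_irrational.
From Stdlib Require Import FunctionalExtensionality PropExtensionality.
From Stdlib Require List.
Import Order.TTheory GRing.Theory Num.Theory.
Local Open Scope ring_scope.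
Set Implicit Arguments. Unset Strict Implicit. Unset Printing Implicit Defensive.

Lemma pred_ext (T : Type) (X Y : T -> Prop) : (forall x, X x <-> Y x) -> X = Y.
Proof.
by move=> XY; apply: functional_extensionality => x; apply: propositional_extensionality.
Qed.

Lemma In_mem (T : eqType) (x : T) (s : seq T) : List.In x s <-> x \in s.
Proof.
elim: s => [|y s IH] //=; rewrite inE; split.
- by case=> [->|/IH ->]; rewrite ?eqxx ?orbT.
- by case/orP=> [/eqP->|/IH]; [left|right].
Qed.

Section SubZ2Monoid.
Variables (P : pred (int * int)) (P0 : P (0, 0)).
Hypothesis PD : forall p q, P p -> P q -> P (addp p q).
Hypothesis P_total : forall g, P g \/ P (- g).
Hypothesis P_pointed : forall g, P g -> P (- g) -> g = 0.

Local Notation HP := (subZ2 P0 PD).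

Lemma val_mop (a b : HP) : val (mop a b) = val a + val b.
Proof. by []. Qed.

Lemma val_munit : val (munit HP) = 0.
Proof. by []. Qed.

Lemma subZ2_cancellative : cancellative HP.
Proof. by move=> a b c /(congr1 val); rewrite !val_mop => /addIr /val_inj. Qed.

Lemma subZ2_reduced : reduced HP.
Proof.
move=> u [v /(congr1 val)]; rewrite val_mop val_munit => uv0.
apply/val_inj/P_pointed; first exact: valP.
have <- : val v = - val u by rewrite -(addKr (val u) (val v)) uv0 addr0.
exact: valP.
Qed.

Lemma subZ2_valuation : valuation_monoid HP.
Proof.
exists (int * int)%type, val; split; last first.
  by move=> g; case: (P_total g) => Pg; [left|right]; exists (exist (fun p => P p) _ Pg).
split=> // [|g]; first exact: val_inj.
case: (P_total g) => Pg.
  by exists (exist _ g Pg), (munit HP); rewrite val_munit subr0.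
by exists (munit HP), (exist _ (- g) Pg); rewrite val_munit sub0r opprK.
Qed.

End SubZ2Monoid.

Section Least.
Variable O : pred (int * int).
Hypothesis O0 : O 0.
Hypothesis OD : forall p q, O p -> O q -> O (p + q).
Hypothesis O_total : forall g, O g \/ O (- g).
Hypothesis O_pointed : forall g, O g -> O (- g) -> g = 0.
Variables (S : pred (int * int)) (S0 : S (0, 0)).
Hypothesis SD : forall p q, S p -> S q -> S (addp p q).

Definition least (X : {p | S p} -> Prop) (m : {p | S p}) : Prop :=
  X m /\ forall x, X x -> O (val x - val m).

Lemma seq_least (s : seq (int * int)) :
  s != [::] -> exists2 m, m \in s & forall z, z \in s -> O (z - m).
Proof.
elim: s => [//|y [|y' s] IH] _.
  by exists y; rewrite ?mem_head // => z /[!inE] /eqP ->; rewrite subrr.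
have [//|m ms m_least] := IH.
have [ym|my] := O_total (y - m).
  exists m => [|z /[!inE] /orP[/eqP-> //|/m_least //]].
  by rewrite inE ms orbT.
exists y => [|z /[!inE] /orP[/eqP->|/m_least zm]]; first exact: mem_head.
  by rewrite subrr.
by rewrite -(subrKA m); apply: OD => //; rewrite -opprB.
Qed.

Lemma least_exists (X : {p | S p} -> Prop) x :
  finite_set X -> X x -> exists m, least X m.
Proof.
move=> [s sX] Xx; have : [seq val y | y <- s] != [::].
  by move/sX/In_mem: Xx; case: s {sX}.
case/seq_least=> _ /mapP[m /In_mem/sX Xm ->] m_least.
by exists m; split=> // z /sX/In_mem zs; apply/m_least/map_f.
Qed.

Lemma least_unique X m m' : least X m -> least X m' -> m = m'.
Proof.
move=> [Xm m_least] [Xm' m'_least]; apply/val_inj/eqP; rewrite -subr_eq0.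
by apply/eqP/O_pointed; rewrite ?opprB; [apply: m'_least | apply: m_least].
Qed.

Lemma least_setop (X Y : subZ2 S0 SD -> Prop) (m1 m2 : subZ2 S0 SD) :
  least X m1 -> least Y m2 -> least (setop X Y) (mop m1 m2).
Proof.
move=> [Xm1 m1_least] [Ym2 m2_least]; split; first by exists m1, m2.
move=> _ [x [y [Xx Yy ->]]]; rewrite !val_mop.
have -> : val x + val y - (val m1 + val m2) = (val x - val m1) + (val y - val m2).
  by rewrite opprD addrACA.
by apply: OD; [apply: m1_least | apply: m2_least].
Qed.

End Least.

Section Shift.
Variables S S' : pred (int * int).

Definition shift (X : {p | S p} -> Prop) (c : int * int) : {p | S' p} -> Prop :=
  fun q => exists2 x, X x & val q = val x - c.

Lemma finite_shift X c : finite_set X -> finite_set (shift X c).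
Proof.
case=> s sX; exists (pmap insub [seq val x - c | x <- s]) => q.
rewrite In_mem mem_pmap_sub; split.
- by case=> x /sX /In_mem xs ->; apply: map_f.
- by case/mapP=> x /In_mem /sX Xx qE; exists x.
Qed.

End Shift.

Lemma shift0 (S : pred (int * int)) (X : {p | S p} -> Prop) : shift X 0 = X.
Proof.
apply: pred_ext => q; split=> [[x Xx]|Xq]; last by exists q; rewrite ?subr0.
by rewrite subr0 => /val_inj ->.
Qed.

Lemma shift_shift (S S' S'' : pred (int * int)) (X : {p | S p} -> Prop) c d :
  (forall x, X x -> S' (val x - c)) ->
  shift (shift X c : {p | S' p} -> Prop) d = shift X (c + d) :> ({p | S'' p} -> Prop).
Proof.
move=> XS'; apply: pred_ext => z; split.
  by case=> q [x Xx qE] zE; exists x; rewrite // zE qE opprD addrA.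
case=> x Xx zE; exists (exist (fun p => S' p) _ (XS' x Xx)); first by exists x.
by rewrite zE /= opprD addrA.
Qed.

Lemma shift_setop (S : pred (int * int)) (S0 : S (0, 0)) SD
    (S' : pred (int * int)) (S'0 : S' (0, 0)) S'D (X Y : subZ2 S0 SD -> Prop) c d :
  (forall x, X x -> S' (val x - c)) -> (forall y, Y y -> S' (val y - d)) ->
  shift (setop X Y) (c + d) =
    setop (shift X c : subZ2 S'0 S'D -> Prop) (shift Y d : subZ2 S'0 S'D -> Prop).
Proof.
move=> XS' YS'; apply: pred_ext => q; split.
  case=> _ [x [y [Xx Yy ->]]] qE.
  exists (exist (fun p => S' p) _ (XS' x Xx)), (exist (fun p => S' p) _ (YS' y Yy)).
  split; [by exists x | by exists y | apply: val_inj].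
  by rewrite val_mop qE val_mop /= opprD addrACA.
case=> a [b [[x Xx aE] [y Yy bE] ->]].
exists (@mop (subZ2 S0 SD) x y); first by exists x, y.
by rewrite !val_mop aE bE opprD addrACA.
Qed.

Definition recenter (S O : pred (int * int)) (X : {p | S p} -> Prop) : {p | O p} -> Prop :=
  fun q => exists m, least O X m /\ shift X (val m) q.
Arguments recenter {S} O X _.

Lemma recenterE (S O : pred (int * int)) (O_pointed : forall g, O g -> O (- g) -> g = 0)
    (X : {p | S p} -> Prop) m :
  least O X m -> recenter O X = shift X (val m).
Proof.
move=> m_least; apply: pred_ext => q; split; last by exists m.
by case=> m' [/(least_unique O_pointed m_least) ->].
Qed.

Section Recenter.
Variables (S : pred (int * int)) (S0 : S (0, 0)).
Hypothesis SD : forall p q, S p -> S q -> S (addp p q).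
Hypothesis S_pointed : forall g, S g -> S (- g) -> g = 0.
Variables (O : pred (int * int)) (O0 : O (0, 0)).
Hypothesis OD : forall p q, O p -> O q -> O (addp p q).
Hypothesis O_total : forall g, O g \/ O (- g).
Hypothesis O_pointed : forall g, O g -> O (- g) -> g = 0.

Local Notation HS := (subZ2 S0 SD).
Local Notation HO := (subZ2 O0 OD).

Lemma Pfin1_recenter (X : HS -> Prop) : Pfin1 X -> Pfin1 (recenter O X : HO -> Prop).
Proof.
move=> [finX X1]; have [m m_least] := least_exists O0 OD O_total finX X1.
rewrite (recenterE O_pointed m_least); split; first exact: finite_shift.
by exists m; [case: m_least | rewrite subrr].
Qed.

Lemma recenter_setop (X Y : HS -> Prop) : Pfin1 X -> Pfin1 Y ->
  recenter O (setop X Y) = setop (recenter O X : HO -> Prop) (recenter O Y : HO -> Prop).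
Proof.
move=> [finX X1] [finY Y1].
have [mX mX_least] := least_exists O0 OD O_total finX X1.
have [mY mY_least] := least_exists O0 OD O_total finY Y1.
rewrite (recenterE O_pointed (least_setop OD mX_least mY_least)) val_mop.
rewrite (recenterE O_pointed mX_least) (recenterE O_pointed mY_least).
by apply: shift_setop; [case: mX_least | case: mY_least].
Qed.

Lemma recenterK (X : HS -> Prop) : Pfin1 X -> recenter S (recenter O X : HO -> Prop) = X.
Proof.
move=> [finX X1]; have [m m_least] := least_exists O0 OD O_total finX X1.
have [_ X_above_m] := m_least.
pose m' : HO := exist (fun p => O p) _ (X_above_m _ X1).
have m'_least : least S (shift X (val m)) m'.
  split=> [|_ [x Xx ->]]; first by exists (munit HS).
  by rewrite /= sub0r opprK subrK; apply: valP.
rewrite (recenterE O_pointed m_least) (recenterE S_pointed m'_least).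
by rewrite shift_shift //= sub0r subrr shift0.
Qed.

End Recenter.

Section ConeIso.
Variables (P : pred (int * int)) (P0 : P (0, 0)).
Hypothesis PD : forall p q, P p -> P q -> P (addp p q).
Hypothesis P_total : forall g, P g \/ P (- g).
Hypothesis P_pointed : forall g, P g -> P (- g) -> g = 0.
Variables (Q : pred (int * int)) (Q0 : Q (0, 0)).
Hypothesis QD : forall p q, Q p -> Q q -> Q (addp p q).
Hypothesis Q_total : forall g, Q g \/ Q (- g).
Hypothesis Q_pointed : forall g, Q g -> Q (- g) -> g = 0.

Theorem cones_Pfin1_iso : Pfin1_iso (subZ2 P0 PD) (subZ2 Q0 QD).
Proof.
exists (recenter Q); split.
- exact: Pfin1_recenter.
- move=> X Y PX PY /(congr1 (recenter P)).
  by rewrite !(recenterK P_pointed Q0 QD Q_total Q_pointed).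
- move=> Y PY; exists (recenter P Y); first exact: Pfin1_recenter.
  exact: (recenterK Q_pointed P0 PD P_total P_pointed).
- exact: recenter_setop.
Qed.

End ConeIso.

Section CofinalPowers.
Variable H : cmonoid.

Definition mexp (u : H) (n : nat) : H := iter n (mop u) (munit H).

Definition mdvd (u v : H) : Prop := exists w, mop u w = v.

Definition cofinal_powers : Prop :=
  forall u v : H, u <> munit H -> exists n, mdvd v (mexp u n).

End CofinalPowers.

Section MonoidIso.
Variables (H K : cmonoid) (f : H -> K) (g : K -> H).
Hypotheses (fK : cancel f g) (gK : cancel g f).
Hypothesis fM : forall a b, f (mop a b) = mop (f a) (f b).

Lemma iso_munit : f (munit H) = munit K.
Proof. by rewrite -[RHS]gK -[g _]mop1 mopC fM gK mop1. Qed.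

Lemma iso_mexp u n : f (mexp u n) = mexp (f u) n.
Proof. by elim: n => [|n IH]; rewrite ?iso_munit //= fM IH. Qed.

Lemma iso_mdvd u v : mdvd (f u) (f v) -> mdvd u v.
Proof. by case=> w uwv; exists (g w); apply: (can_inj fK); rewrite fM gK. Qed.

End MonoidIso.

Lemma cofinal_powers_iso (H K : cmonoid) :
  monoid_iso H K -> cofinal_powers K -> cofinal_powers H.
Proof.
case=> f [[g fK gK] fM] cofK u v u1.
have [|n vun] := cofK (f u) (f v).
  by rewrite -(iso_munit gK fM) => /(can_inj fK).
by exists n; apply: (iso_mdvd fK gK fM); rewrite (iso_mexp gK fM).
Qed.

Lemma val_mexp (P : pred (int * int)) (P0 : P (0, 0)) PD (u : subZ2 P0 PD) n :
  val (mexp u n) = val u *+ n.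
Proof.
elim: n => [|n IH]; first by rewrite mulr0n.
by rewrite -[mexp u n.+1]/(mop u (mexp u n)) val_mop IH mulrS.
Qed.

Lemma H1pred_total g : H1pred g \/ H1pred (- g).
Proof. by case: g => x y; rewrite /H1pred /=; lia. Qed.

Lemma H1pred_pointed g : H1pred g -> H1pred (- g) -> g = 0.
Proof. by case: g => x y; rewrite /H1pred /= => ? ?; apply/eqP; rewrite xpair_eqE; lia. Qed.

Lemma H1ex_not_cofinal_powers : ~ cofinal_powers H1ex.
Proof.
pose u : H1ex := exist (fun p => H1pred p) (1, 0) isT.
pose v : H1ex := exist (fun p => H1pred p) (0, 1) isT.
have snd_mulrn (p : int * int) n : (p *+ n).2 = p.2 *+ n.
  by elim: n => // n IH; rewrite !mulrS /= IH.
case/(_ u v) => [/(congr1 val) //|n [w /(congr1 (fun a => (val a).2))]].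
rewrite val_mop val_mexp snd_mulrn mul0rn /=.
move=> w2E; have : H1pred (val w) := valP w.
by rewrite /H1pred -(addKr 1 (val w).2) w2E addr0.
Qed.

Section H2.
Variables (R : realType) (alpha : R).

Definition slack (p : int * int) : R := alpha * p.1%:~R - p.2%:~R.

Lemma slackB : {morph slack : p q / p - q}.
Proof. by move=> [x y] [x' y']; rewrite /slack /= !intrB; ring. Qed.

HB.instance Definition _ := GRing.isZmodMorphism.Build _ _ slack slackB.

Lemma H2predE p : H2pred alpha p = (0 <= slack p).
Proof. by rewrite /H2pred subr_ge0. Qed.

Lemma H2pred_total g : H2pred alpha g \/ H2pred alpha (- g).
Proof.
rewrite !H2predE raddfN oppr_ge0.
by case/orP: (le_total 0 (slack g)); [left|right].
Qed.

Hypothesis alpha_irrational : irrational alpha.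

Lemma slack_eq0 p : slack p = 0 -> p = 0.
Proof.
case: p => x y; rewrite /slack /= => /eqP; rewrite subr_eq0 => /eqP yE.
have [x0|x0] := eqVneq x 0.
  by move: yE; rewrite x0 mulr0 => /eqP; rewrite eq_sym intr_eq0 => /eqP ->.
case: alpha_irrational; exists (y%:~R / x%:~R : rat) => //.
by rewrite fmorph_div /= !ratr_int -yE mulfK // intr_eq0.
Qed.

Lemma H2pred_pointed g : H2pred alpha g -> H2pred alpha (- g) -> g = 0.
Proof.
rewrite !H2predE raddfN oppr_ge0 => g_ge0 g_le0.
by apply/slack_eq0/eqP; rewrite eq_le g_le0 g_ge0.
Qed.

Lemma H2ex_cofinal_powers : cofinal_powers (H2ex alpha).
Proof.
move=> u v u1.
have su_gt0 : 0 < slack (val u).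
  rewrite lt_def -H2predE (valP u) andbT.
  by apply/eqP => /slack_eq0 u0; apply/u1/val_inj.
have [n vn] : exists n, slack (val v) <= slack (val u) *+ n.
  have sv_ge0 : 0 <= slack (val v) by rewrite -H2predE; apply: valP.
  exists (Num.bound (slack (val v) / slack (val u))).
  by rewrite -mulr_natl -ler_pdivrMr // ltW // archi_boundP // divr_ge0 // ltW.
have cP : H2pred alpha (val u *+ n - val v) by rewrite H2predE raddfB raddfMn subr_ge0.
exists n, (exist (fun p => H2pred alpha p) _ cP); apply: val_inj.
by rewrite val_mop val_mexp /= addrC subrK.
Qed.

Lemma H1ex_H2ex_not_iso : ~ monoid_iso H1ex (H2ex alpha).
Proof. by move/cofinal_powers_iso/(_ H2ex_cofinal_powers); apply: H1ex_not_cofinal_powers. Qed.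

Lemma H1ex_H2ex_witness_pair : witness_pair H1ex (H2ex alpha).
Proof.
split; first exact: subZ2_cancellative.
split; first exact: subZ2_cancellative.
split; first by apply: subZ2_valuation; apply: H1pred_total.
split; first by apply: subZ2_valuation; apply: H2pred_total.
split; first by apply: subZ2_reduced; apply: H1pred_pointed.
split; first by apply: subZ2_reduced; apply: H2pred_pointed.
split; first exact: H1ex_H2ex_not_iso.
apply: cones_Pfin1_iso.
- exact: H1pred_total.
- exact: H1pred_pointed.
- exact: H2pred_total.
- exact: H2pred_pointed.
Qed.

End H2.

Theorem corollary3 :
  (exists H1 H2 : cmonoid, witness_pair H1 H2) /\
  (forall (R : realType) (alpha : R), 0 < alpha -> irrational alpha ->
     witness_pair H1ex (H2ex alpha)).
Proof.
split; last by move=> R alpha _; apply: H1ex_H2ex_witness_pair.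
exists H1ex, (H2ex (trigo.pi : Rdefinitions.R)).
exact/H1ex_H2ex_witness_pair/pi_irrational.pi_irrationnal.
Qed.
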